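(* Let $(\mathsf P,\mathcal O)$ be a semitopology and $p\in\mathsf P$. Then in the semiframe $(\mathcal O,\subseteq,\between)$ we have $\mathcal K(\mathrm{nbhd}(p))=K(p)$.
   Context: A semitopology is a pair $(\mathsf P,\mathcal O)$ where $\mathcal O\subseteq\mathcal P(\mathsf P)$ contains $\varnothing,\mathsf P$ and is closed under arbitrary unions; $(\mathcal O,\subseteq,\between)$ is the semiframe with joins given by unions and $O\between O'$ meaning $O\cap O'\neq\varnothing$. $\mathrm{nbhd}(p)=\{O\in\mathcal O\mid p\in O\}$. Points $p,p'$ are intertwined when every open containing $p$ meets every open containing $p'$; $I(p)$ is the set of points intertwined with $p$; $K(p)=\mathrm{int}(I(p))$, the union of all open subsets of $I(p)$. In a semiframe $(X,\le,\ast)$ (complete join-semilattice with commutative relation $\ast$ satisfying $x\ast x$ for $x\ne\bot$ and $x\ast\bigvee Y\iff\exists y\in Y.\,x\ast y$), for $F\subseteq X$ write $y\ast F$ when $y\ast z$ for all $z\in F$; the abstract community is $\mathcal K(F)=\bigvee\{z\in X\mid\neg(z\ast c_F)\}$ where $c_F=\bigvee\{y\in X\mid\neg(y\ast F)\}$. *)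

From Stdlib Require Import Classical FunctionalExtensionality PropExtensionality ProofIrrelevance.


Record semitopology (T : Type) := {
  opens : (T -> Prop) -> Prop;
  open_empty : opens (fun _ => False);
  open_full : opens (fun _ => True);
  open_union : forall F : (T -> Prop) -> Prop,
      (forall U, F U -> opens U) -> opens (fun x => exists U, F U /\ U x)
}.

Definition intertwined T (S : semitopology T) (p q : T) : Prop :=
  forall U V, opens T S U -> opens T S V -> U p -> V q -> exists x, U x /\ V x.

Definition I_of T (S : semitopology T) (p : T) : T -> Prop :=
  fun q => intertwined T S p q.

Definition K_of T (S : semitopology T) (p : T) : T -> Prop :=
  fun x => exists U, opens T S U /\ (forall y, U y -> I_of T S p y) /\ U x.

Record semiframe := {
  sf_car : Type;
  sf_le : sf_car -> sf_car -> Prop;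
  sf_join : (sf_car -> Prop) -> sf_car;
  sf_ast : sf_car -> sf_car -> Prop;
  sf_le_refl : forall x, sf_le x x;
  sf_le_trans : forall x y z, sf_le x y -> sf_le y z -> sf_le x z;
  sf_le_antisym : forall x y, sf_le x y -> sf_le y x -> x = y;
  sf_join_ub : forall (Y : sf_car -> Prop) y, Y y -> sf_le y (sf_join Y);
  sf_join_least : forall (Y : sf_car -> Prop) z,
      (forall y, Y y -> sf_le y z) -> sf_le (sf_join Y) z;
  sf_ast_sym : forall x y, sf_ast x y -> sf_ast y x;
  sf_ast_refl : forall x, x <> sf_join (fun _ => False) -> sf_ast x x;
  sf_ast_join : forall x (Y : sf_car -> Prop),
      sf_ast x (sf_join Y) <-> exists y, Y y /\ sf_ast x y
}.

Definition sf_ast_set (X : semiframe) (y : sf_car X) (F : sf_car X -> Prop) : Prop :=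
  forall z, F z -> sf_ast X y z.

Definition sf_cF (X : semiframe) (F : sf_car X -> Prop) : sf_car X :=
  sf_join X (fun y => ~ sf_ast_set X y F).

Definition abstract_community (X : semiframe) (F : sf_car X -> Prop) : sf_car X :=
  sf_join X (fun z => ~ sf_ast X z (sf_cF X F)).

Section OpensSemiframe.
Variables (T : Type) (S : semitopology T).

Definition ocar := { U : T -> Prop | opens T S U }.
Definition ole (U V : ocar) : Prop := forall x, proj1_sig U x -> proj1_sig V x.
Definition oset (Y : ocar -> Prop) : T -> Prop :=
  fun x => exists V, (exists H : opens T S V, Y (exist _ V H)) /\ V x.
Lemma oset_open (Y : ocar -> Prop) : opens T S (oset Y).
Proof. apply (open_union T S). intros U [H _]. exact H. Qed.
Definition ojoin (Y : ocar -> Prop) : ocar := exist _ (oset Y) (oset_open Y).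
Definition oast (U V : ocar) : Prop := exists x, proj1_sig U x /\ proj1_sig V x.

Lemma ocar_ext (U V : ocar) : ole U V -> ole V U -> U = V.
Proof.
  destruct U as [U HU], V as [V HV]; unfold ole; simpl; intros h1 h2.
  assert (E : U = V).
  { apply functional_extensionality; intro x;
    apply propositional_extensionality; split; auto. }
  subst V. f_equal. apply proof_irrelevance.
Qed.

Lemma oset_ub (Y : ocar -> Prop) y : Y y -> ole y (ojoin Y).
Proof.
  destruct y as [V HV]; intros hy x hx; simpl in *.
  exists V; split; [exists HV; exact hy | exact hx].
Qed.

Lemma oset_least (Y : ocar -> Prop) z : (forall y, Y y -> ole y z) -> ole (ojoin Y) z.
Proof.
  intros h x [V [[HV hY] hx]]. exact (h _ hY x hx).
Qed.

Lemma oast_refl x : x <> ojoin (fun _ => False) -> oast x x.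
Proof.
  intro hne. destruct (classic (exists t, proj1_sig x t)) as [[t ht]|hn].
  - exists t; auto.
  - exfalso; apply hne; apply ocar_ext.
    + intros t ht; exfalso; apply hn; exists t; exact ht.
    + intros t [V [[_ []] _]].
Qed.

Lemma oast_join x (Y : ocar -> Prop) :
  oast x (ojoin Y) <-> exists y, Y y /\ oast x y.
Proof.
  split.
  - intros [t [hx [V [[HV hY] hV]]]].
    exists (exist _ V HV); split; [exact hY | exists t; auto].
  - intros [[V HV] [hY [t [hx hV]]]].
    exists t; split; [exact hx|]. exists V; split; [exists HV; exact hY | exact hV].
Qed.

Definition opens_semiframe : semiframe.
Proof.
  refine {| sf_car := ocar; sf_le := ole; sf_join := ojoin; sf_ast := oast |}.
  - intros x t h; exact h.
  - intros x y z h1 h2 t h; auto.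
  - exact ocar_ext.
  - exact oset_ub.
  - exact oset_least.
  - intros x y [t [h1 h2]]; exists t; auto.
  - exact oast_refl.
  - exact oast_join.
Defined.

Definition nbhd (p : T) : sf_car opens_semiframe -> Prop := fun U : ocar => proj1_sig U p.
End OpensSemiframe.

From Stdlib Require Import Classical FunctionalExtensionality PropExtensionality.

(** The proof computes the two joins in the definition of [K(nbhd(p))]
    pointwise, using that joins of opens are unions.
    - The auxiliary open [c = c_nbhd(p)] is the union of the opens that miss
      some open neighbourhood of [p]; a point lies in such an open exactly
      when it is not intertwined with [p].  So [c] is the complement of [I(p)]
      ([in_cF_nbhd]).
    - An open misses the complement of a set [A] iff it is contained in [A]
      ([misses_complement]).  Hence [K(nbhd(p))], the union of the opens
      missing [c], is the union of the opens contained in [I(p)], which is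
      [K(p)] by definition. *)

Section OpensCommunity.
Variables (T : Type) (S : semitopology T).

Lemma in_ojoin (Y : ocar T S -> Prop) (x : T) :
  proj1_sig (ojoin T S Y) x <-> exists V : ocar T S, Y V /\ proj1_sig V x.
Proof.
  unfold ojoin, oset; simpl; split.
  - intros [V [[HV hY] hx]]. exists (exist _ V HV). split; assumption.
  - intros [[V HV] [hY hx]]. exists V. split; [exists HV |]; assumption.
Qed.

Lemma not_meets_nbhd (p : T) (V : ocar T S) :
  ~ sf_ast_set (opens_semiframe T S) V (nbhd T S p) <->
  exists U : ocar T S, proj1_sig U p /\ ~ oast T S V U.
Proof.
  unfold sf_ast_set, nbhd; simpl; split.
  - intro hn. apply NNPP. intro hno. apply hn. intros U hU.
    apply NNPP. intro hV. apply hno. exists U. split; assumption.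
  - intros [U [hU hVU]] hall. exact (hVU (hall U hU)).
Qed.

Lemma in_cF_nbhd (p x : T) :
  proj1_sig (sf_cF (opens_semiframe T S) (nbhd T S p)) x <-> ~ I_of T S p x.
Proof.
  unfold sf_cF, I_of, intertwined. change (sf_join _) with (ojoin T S).
  rewrite in_ojoin. split.
  - intros [V [hV hx]] hint.
    apply not_meets_nbhd in hV. destruct hV as [U [hU hVU]].
    destruct (hint (proj1_sig U) (proj1_sig V) (proj2_sig U) (proj2_sig V) hU hx)
      as [t [htU htV]].
    apply hVU. exists t. split; assumption.
  - intro hnint.
    assert (witness : exists U V, opens T S U /\ opens T S V /\ U p /\ V x /\
                                  ~ exists t, U t /\ V t).
    { apply NNPP. intro hno. apply hnint. intros U V HU HV hU hV.
      apply NNPP. intro hdisj. apply hno. exists U, V. tauto. }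
    destruct witness as [U [V [HU [HV [hU [hV hdisj]]]]]].
    exists (exist _ V HV). split; [| exact hV].
    apply not_meets_nbhd. exists (exist _ U HU). split; [exact hU |].
    intros [t [hVt hUt]]. apply hdisj. exists t. split; assumption.
Qed.

Lemma misses_complement (Z W : ocar T S) (A : T -> Prop) :
  (forall x, proj1_sig W x <-> ~ A x) ->
  (~ oast T S Z W <-> forall x, proj1_sig Z x -> A x).
Proof.
  intro hW. split.
  - intros hmiss x hZ. apply NNPP. intro hA.
    apply hmiss. exists x. split; [exact hZ | apply hW; exact hA].
  - intros hsub [x [hZ hWx]]. apply hW in hWx. exact (hWx (hsub x hZ)).
Qed.

End OpensCommunity.

Theorem proposition9p25 (T : Type) (S : semitopology T) (p : T) :
  proj1_sig (abstract_community (opens_semiframe T S) (nbhd T S p) : ocar T S) = K_of T S p.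
Proof.
  apply functional_extensionality; intro x; apply propositional_extensionality.
  unfold abstract_community, K_of. change (sf_join _) with (ojoin T S).
  rewrite in_ojoin.
  assert (misses_c : forall Z : ocar T S,
             ~ sf_ast (opens_semiframe T S) Z (sf_cF (opens_semiframe T S) (nbhd T S p))
             <-> forall y, proj1_sig Z y -> I_of T S p y).
  { intro Z. exact (misses_complement T S Z _ _ (in_cF_nbhd T S p)). }
  split.
  - intros [Z [hZ hx]].
    exists (proj1_sig Z). split; [exact (proj2_sig Z) |].
    split; [exact (proj1 (misses_c Z) hZ) | exact hx].
  - intros [Z [HZ [hsub hx]]]. exists (exist _ Z HZ). split; [| exact hx].
    exact (proj2 (misses_c (exist _ Z HZ)) hsub).
Qed.
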